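(* Let $\boldsymbol\zeta=(\mathbf z^{(\mathsf e,j)})_{(\mathsf e,j)\in\mathcal E\times[K]}$ be a restriction sequence for $\mathsf{DIHP}(G,n,\alpha,K)$ that is not cyclic, and let $V_1,\dots,V_t\subseteq\mathcal V\times[n]$ be the connected components of $H_{\boldsymbol\zeta}$ with at least two vertices. Then (1) $\mathbb E_x[g_{\boldsymbol\zeta}(x)]=1$ for $x$ uniform in $\mathbb Z_N^{\mathcal V\times[n]}$; and (2) for any $b\in\mathbb Z_N^{\mathcal V\times[n]}$, $\widehat{g_{\boldsymbol\zeta}}(b)\ne0$ only if $\mathrm{supp}(b)\subseteq\bigcup_{i\in[t]}V_i$ and $|\mathrm{supp}(b)\cap V_i|\ne1$ for every $i\in[t]$.
   Context: $N\ge2$, $\mathbb Z_N=\mathbb Z/N\mathbb Z$. $G=(\mathcal V,\mathcal E,N,(\mu_{\mathsf e}))$ is a distribution-labeled $k$-graph: finite set $\mathcal V$, finite multiset $\mathcal E$ of ordered $k$-tuples of distinct vertices, and one-wise independent distributions $\mu_{\mathsf e}$ on $\mathbb Z_N^k$ (each coordinate marginal uniform), with pmf $\mu_{\mathsf e}(\cdot)$. For $\mathsf e=(\mathsf v_1,\dots,\mathsf v_k)$, $\mathcal U_{\mathsf e}=(\{\mathsf v_1\}\times[n],\dots,\{\mathsf v_k\}\times[n])$ and $\prod\mathcal U_{\mathsf e}$ is the product of these sets. A restriction sequence is $\boldsymbol\zeta=(\mathbf z^{(\mathsf e,j)})_{(\mathsf e,j)\in\mathcal E\times[K]}$ where each $\mathbf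 z^{(\mathsf e,j)}$ is a map $\prod\mathcal U_{\mathsf e}\to\mathbb Z_N^k\cup\{\mathtt{nil}\}$ whose support $\{e:\mathbf z(e)\ne\mathtt{nil}\}$ is a matching (pairwise vertex-disjoint tuples) of size at most $\alpha n$. $H_{\boldsymbol\zeta}$ is the $k$-uniform hypergraph on $\mathcal V\times[n]$ with edge set $\bigcup\mathrm{supp}\mathbf z^{(\mathsf e,j)}$. $\boldsymbol\zeta$ is cyclic if the supports are not pairwise disjoint or some $\ell\ge1$ edges of $H_{\boldsymbol\zeta}$ together cover at most $\ell(k-1)$ vertices. For $e=(v_1,\dots,v_k)$, $x_{|e}=(x_{v_1},\dots,x_{v_k})$. $g_{\boldsymbol\zeta}(x)=\prod_{(\mathsf e,j)}\prod_{e\in\mathrm{supp}\mathbf z^{(\mathsf e,j)}}N^k\mu_{\mathsf e}(x_{|e}-\mathbf z^{(\mathsf e,j)}(e))$. Fourier: $\chi_b(x)=\exp(\frac{2\pi\mathrm i}N\sum_vb_vx_v)$, $\widehat g(b)=\mathbb E_x[g(x)\overline{\chi_b(x)}]$. *)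

From HB Require Import structures.
From mathcomp Require Import all_boot all_order all_algebra.
Set Implicit Arguments. Unset Strict Implicit. Unset Printing Implicit Defensive.
Import Order.TTheory GRing.Theory Num.Theory.
Local Open Scope ring_scope.

Section DIHP.
Variables (C : numClosedFieldType) (V E : finType) (k n K N : nat).
(* the multiset of k-tuples: edge occurrences indexed by E *)
Variable ev : E -> k.-tuple V.

(* the hyperedge of U_e selected by c : [k] -> [n]: ((v_1,c_1),...,(v_k,c_k)) *)
Definition hedge (e : E) (c : {ffun 'I_k -> 'I_n}) (i : 'I_k) : V * 'I_n :=
  (tnth (ev e) i, c i).
Definition hverts (e : E) (c : {ffun 'I_k -> 'I_n}) : {set V * 'I_n} :=
  [set hedge e c i | i : 'I_k].

Definition dist_labeled (mu : E -> {ffun 'I_k -> 'Z_N} -> C) : Prop :=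
  [/\ forall e y, 0 <= mu e y,
      forall e, \sum_y mu e y = 1
    & forall e (i : 'I_k) (a : 'Z_N), \sum_(y : {ffun 'I_k -> 'Z_N} | y i == a) mu e y = (N%:R)^-1].

Definition Occ := (E * 'I_K * {ffun 'I_k -> 'I_n})%type.

Variable z : E -> 'I_K -> {ffun 'I_k -> 'I_n} -> option {ffun 'I_k -> 'Z_N}.

Definition insupp (o : Occ) : bool := z o.1.1 o.1.2 o.2 != None.
Definition overts (o : Occ) : {set V * 'I_n} := hverts o.1.1 o.2.

Definition is_restriction_seq (alpha : C) : Prop :=
  forall e j,
    (forall c c', z e j c != None -> z e j c' != None -> c != c' ->
       [disjoint hverts e c & hverts e c'])
    /\ (#|[set c | z e j c != None]|%:R <= alpha * n%:R).

(* cyclic restriction sequence; H_zeta is viewed with its edges counted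
   by occurrence *)
Definition cyclic : bool :=
  [exists o1 : Occ, exists o2 : Occ,
     [&& insupp o1, insupp o2, o1.1 != o2.1 &
         [forall i, hedge o1.1.1 o1.2 i == hedge o2.1.1 o2.2 i]]]
  || [exists S : {set Occ},
       [&& S != set0, S \subset [set o | insupp o] &
           (#|\bigcup_(o in S) overts o| <= #|S| * k.-1)%N]].

Definition hadj : rel (V * 'I_n) :=
  fun u w => [exists o : Occ, [&& insupp o, u \in overts o & w \in overts o]].
Definition hcomp (u : V * 'I_n) : {set V * 'I_n} := [set w | connect hadj u w].

Variable mu : E -> {ffun 'I_k -> 'Z_N} -> C.

Definition gzeta (x : {ffun V * 'I_n -> 'Z_N}) : C :=
  \prod_(o : Occ)
    match z o.1.1 o.1.2 o.2 with
    | Some a => (N ^ k)%:R * mu o.1.1 [ffun i => x (hedge o.1.1 o.2 i) - a i]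
    | None => 1
    end.

End DIHP.

Section Fourier.
Variables (C : numClosedFieldType) (T : finType) (N : nat).

(* omega = exp(2 pi i / N): N.-root (-1) is the N-th root of -1 of minimal
   argument, i.e. exp(i pi / N) *)
Definition omega : C := (N.-root (-1)) ^+ 2.

Definition chi (b x : {ffun T -> 'Z_N}) : C :=
  omega ^+ (\sum_v (val (b v) * val (x v)))%N.

Definition expect (f : {ffun T -> 'Z_N} -> C) : C :=
  (#|{: {ffun T -> 'Z_N}}|%:R)^-1 * \sum_x f x.

Definition fourier (f : {ffun T -> 'Z_N} -> C) (b : {ffun T -> 'Z_N}) : C :=
  expect (fun x => f x * (chi b x)^*).
End Fourier.

From HB Require Import structures.
From mathcomp Require Import all_boot all_order all_algebra.
From mathcomp Require Import ring zify.
Import Order.TTheory GRing.Theory Num.Theory.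

(* Non-cyclicity makes the hypergraph of supported hyperedges a forest in the
   strong sense that a nonempty family F of them covers more than |F|(k-1)
   vertices.  Counting degrees then shows that F always has a leaf: an edge
   all of whose vertices but one lie in no other edge of F and avoid any
   given vertex w.  Integrating a leaf factor N^k mu_e(x_e - a) over its free
   coordinates only uses the uniform one-dimensional marginals of mu_e and
   gives 1, so peeling leaves one at a time yields E[g] = 1.
   If b vanishes on the component of w except at w, peeling all edges of
   that component (with w marked) leaves a sum that is invariant under
   x_w -> x_w + 1, which multiplies the character by omega^{b_w} != 1; hence
   the Fourier coefficient is 0.
   That omega = (N.-root (-1))^2 is a primitive N-th root of unity comes from
   the choice of rootC as the root of largest real part in the upper half
   plane: q-th roots (q > 1) of a unit z != 1 with Im z >= 0 have larger real
   part, because summing 1/(1 - y) over the roots y of X^q - z gives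
   q/(1 - z), while Im (1/(1 - y)) grows with Re y on the upper semicircle. *)

Section LowDegreeEdge.
Variables (I T : finType) (k : nat) (S : I -> {set T}).
Hypothesis card_S : forall i, #|S i| = k.

Definition deg (F : {set I}) (v : T) : nat := \sum_(i in F) (v \in S i).

Lemma sum_deg F : \sum_v deg F v = #|F| * k.
Proof.
rewrite exchange_big /= -sum_nat_const; apply: eq_bigr => i _.
rewrite -(card_S i) -sum1_card [RHS]big_mkcond.
by apply: eq_bigr => v _; case: (v \in S i).
Qed.

Lemma sum_deg_predn F :
  \sum_v (deg F v).-1 + #|\bigcup_(i in F) S i| = \sum_v deg F v.
Proof.
rewrite -sum1_card [X in _ + X]big_mkcond -big_split /=; apply: eq_bigr => v _.
have -> : (v \in \bigcup_(i in F) S i) = (0 < deg F v).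
  rewrite lt0n sum_nat_eq0 negb_forall; apply/bigcupP/existsP.
    by case=> i iF vi; exists i; rewrite iF vi.
  by case=> i; rewrite negb_imply eqb0 negbK => /andP[iF vi]; exists i.
by case: (deg F v) => [|d]; rewrite ?addn1.
Qed.

Lemma exists_low_degree_edge F (W : {set T}) : F != set0 -> #|W| <= 1 ->
  #|F| * k.-1 < #|\bigcup_(i in F) S i| ->
  exists2 i, i \in F & #|[set v in S i | (1 < deg F v) || (v \in W)]| <= 1.
Proof.
move=> F0 W1 U_gt; pose phi v := (1 < deg F v) || (v \in W).
apply/exists_inP/contraT; rewrite negb_exists_in => /forall_inP bad_ge2.
have bad_sum : 2 * #|F| <= \sum_v deg F v * phi v.
  rewrite mulnC -sum_nat_const.
  rewrite [X in _ <= X](_ : _ = \sum_(i in F) #|[set v in S i | phi v]|).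
    by apply: leq_sum => i /bad_ge2; rewrite ltnNge.
  rewrite (eq_bigr (fun v => \sum_(i in F) (v \in S i) * phi v)); last first.
    by move=> v _; rewrite big_distrl.
  rewrite exchange_big; apply: eq_bigr => i _.
  rewrite -sum1_card [RHS]big_mkcond; apply: eq_bigr => v _.
  by rewrite inE; case: (v \in S i); case: (phi v).
have bad_le : \sum_v deg F v * phi v <= 2 * \sum_v (deg F v).-1 + #|W|.
  rewrite big_distrr -sum1_card [X in _ + X]big_mkcond -big_split /=.
  apply: leq_sum => v _; rewrite /phi.
  by case: (v \in W); case: (deg F v) => [|[|d]] /=; lia.
have Fk : #|F| * k <= #|F| * k.-1 + #|F| by rewrite -mulnSr leq_mul2l leqSpred orbT.
have W_eq := sum_deg_predn F; rewrite sum_deg in W_eq.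
have F_gt0 : 0 < #|F| by rewrite card_gt0.
lia.
Qed.
End LowDegreeEdge.

Local Open Scope ring_scope.

Section UnitCircle.
Variable C : numClosedFieldType.
Implicit Types (y z : C) (rs : seq C).

Lemma logderiv_prod_XsubC rs (a : C) : a \notin rs ->
  (\sum_(y <- rs) (a - y)^-1) * \prod_(y <- rs) (a - y)
    = (\prod_(y <- rs) ('X - y%:P))^`().[a].
Proof.
elim: rs => [|y rs IH]; first by rewrite !big_nil derivC horner0 mul0r.
rewrite inE negb_or => /andP[ay ars].
have ay0 : a - y != 0 by rewrite subr_eq0.
rewrite !big_cons derivM derivXsubC mul1r hornerD hornerM !hornerE -IH //.
rewrite horner_prod; under [in RHS]eq_bigr do rewrite !hornerE.
by rewrite /= mulrDl mulrDl mulVf // mul1r; congr (_ + _); ring.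
Qed.

Lemma normC2_1B y : `|y| = 1 -> `|1 - y| ^+ 2 = 2 - 2 * 'Re y.
Proof.
move=> ny; have := normC2_Re_Im y; rewrite ny expr1n => y2.
have Im2 : 'Im y ^+ 2 = 1 - 'Re y ^+ 2 by rewrite y2 addrC addKr.
rewrite normC2_Re_Im !raddfB /= (Creal_ReP 1 _) ?(Creal_ImP 1 _) ?rpred1 //.
by rewrite sub0r sqrrN Im2; ring.
Qed.

Lemma Re_inv_1B y : `|y| = 1 -> y != 1 -> 'Re ((1 - y)^-1) = 2^-1.
Proof.
move=> ny y1; have d0 : `|1 - y| ^+ 2 != 0.
  by rewrite expf_eq0 normr_eq0 subr_eq0 eq_sym.
have Re_y1 : 1 - 'Re y != 0.
  apply: contra_neq d0; rewrite normC2_1B // => /eqP; rewrite subr_eq0.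
  by move=> /eqP <-; rewrite mulr1 subrr.
rewrite ReV raddfB /= (Creal_ReP 1 _) ?rpred1 // normC2_1B //.
rewrite [2 - _](_ : _ = 2 * (1 - 'Re y)); last by ring.
by rewrite invfM mulrCA mulfV // mulr1.
Qed.

Lemma Im_inv_1B y : 'Im ((1 - y)^-1) = 'Im y / `|1 - y| ^+ 2.
Proof. by rewrite ImV raddfB /= (Creal_ImP 1 _) ?rpred1 // sub0r opprK. Qed.

Lemma Im_inv_1B_le y z : `|y| = 1 -> `|z| = 1 -> y != 1 -> z != 1 ->
  0 <= 'Im y -> 0 <= 'Im z -> 'Re y <= 'Re z ->
  'Im ((1 - y)^-1) <= 'Im ((1 - z)^-1).
Proof.
move=> ny nz y1 z1 Iy Iz Ryz.
have dpos (u : C) : u != 1 -> 0 < `|1 - u| ^+ 2.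
  by move=> u1; rewrite exprn_gt0 // normr_gt0 subr_eq0 eq_sym.
rewrite !Im_inv_1B ler_pdivrMr ?dpos // mulrAC ler_pdivlMr ?dpos //.
rewrite !normC2_1B //.
have y2 := normC2_Re_Im y; rewrite ny expr1n in y2.
have z2 := normC2_Re_Im z; rewrite nz expr1n in z2.
have Ry1 : 'Re y <= 1 by rewrite -ny; exact: (leif_Re_Creal y).1.
have Rz1 : 'Re z <= 1 by rewrite -nz; exact: (leif_Re_Creal z).1.
have ge0 (u v : C) : 'Re v <= 1 -> 0 <= 'Im u -> 0 <= 'Im u * (2 - 2 * 'Re v).
  by move=> Rv1 Iu; rewrite mulr_ge0 // subr_ge0 -{2}(mulr1 2) ler_pM2l ?ltr0n.
rewrite -ler_sqr ?nnegrE ?ge0 // -subr_ge0.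
have -> : ('Im z * (2 - 2 * 'Re y)) ^+ 2 - ('Im y * (2 - 2 * 'Re z)) ^+ 2
    = 8 * ((1 - 'Re y) * (1 - 'Re z) * ('Re z - 'Re y)).
  have ey : 'Im y ^+ 2 = 1 - 'Re y ^+ 2 by rewrite y2 addrC addKr.
  have ez : 'Im z ^+ 2 = 1 - 'Re z ^+ 2 by rewrite z2 addrC addKr.
  by rewrite !exprMn ey ez; ring.
by rewrite mulr_ge0 ?ler0n // !mulr_ge0 ?subr_ge0.
Qed.

Lemma sum_roots_XnsubC n (c : C) rs : (1 < n)%N ->
  'X^n - c%:P = \prod_(y <- rs) ('X - y%:P) -> \sum_(y <- rs) y = 0.
Proof.
move=> n_gt1 Drs; have n_gt0 := ltnW n_gt1.
have size_rs : size rs = n.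
  by apply: succn_inj; rewrite -(size_prod_XsubC rs id) -Drs size_XnsubC.
have rs0 : size rs != 0 by rewrite size_rs -lt0n.
apply/eqP; rewrite -oppr_eq0 -(coefPn_prod_XsubC rs0) -Drs size_rs.
rewrite coefB coefXn coefC ltn_eqF; last by rewrite ltn_predL.
by rewrite gtn_eqF ?subr0 // ltn_predRL.
Qed.

Lemma sum_inv_1B_roots n z rs : z != 1 ->
  'X^n - z%:P = \prod_(y <- rs) ('X - y%:P) ->
  \sum_(y <- rs) (1 - y)^-1 = n%:R / (1 - z).
Proof.
move=> z1 Drs; have z1' : 1 - z != 0 by rewrite subr_eq0 eq_sym.
have prod1 : \prod_(y <- rs) (1 - y) = 1 - z.
  have := congr1 (horner^~ 1) Drs; rewrite horner_prod !hornerE expr1n => ->.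
  by apply: eq_bigr => y _; rewrite !hornerE.
have rs1 : 1 \notin rs.
  apply: contra z1 => rs1; have : root ('X^n - z%:P) 1 by rewrite Drs root_prod_XsubC.
  by rewrite rootE !hornerE expr1n subr_eq0 eq_sym.
have := @logderiv_prod_XsubC rs 1 rs1; rewrite prod1 -Drs.
rewrite derivB derivXn derivC subr0 hornerMn hornerXn expr1n => <-.
by rewrite mulfK.
Qed.

Lemma rootC_Re_gt n z : (1 < n)%N -> `|z| = 1 -> 0 <= 'Im z -> z != 1 ->
  'Re z < 'Re (n.-root z).
Proof.
move=> n_gt1 nz Iz z1; have n_gt0 := ltnW n_gt1.
rewrite real_ltNge ?Creal_Re //; apply/negP => Re_root_le.
have [rs Drs] := closed_field_poly_normal ('X^n - z%:P : {poly C}).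
rewrite (monicP (monicXnsubC z n_gt0)) scale1r in Drs.
have size_rs : size rs = n.
  by apply: succn_inj; rewrite -(size_prod_XsubC rs id) -Drs size_XnsubC.
have rootX y : y \in rs -> y ^+ n = z.
  move=> yrs; have : root ('X^n - z%:P) y by rewrite Drs root_prod_XsubC.
  by rewrite rootE !hornerE subr_eq0 => /eqP.
have norm_rs y : y \in rs -> `|y| = 1.
  by move=> /rootX yz; apply/eqP; rewrite -(pexpr_eq1 n_gt0) // -normrX yz nz.
have rs_neq1 y : y \in rs -> y != 1.
  by move=> /rootX yz; apply: contra_neq z1 => y1; rewrite -yz y1 expr1n.
pose tau y := 'Im ((1 - y)^-1).
have tau_le y : y \in rs -> tau y <= tau z.
  move=> yrs; have [Iy|Iy] := real_ge0P (Creal_Im y).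
    have Re_yz := le_trans (rootC_Re_max n_gt0 (rootX y yrs) Iy) Re_root_le.
    exact: Im_inv_1B_le (norm_rs y yrs) nz (rs_neq1 y yrs) z1 Iy Iz Re_yz.
  apply: (@le_trans _ _ 0); rewrite /tau !Im_inv_1B ?divr_ge0 ?exprn_ge0 //.
  by rewrite pmulr_lle0 ?ltW // invr_gt0 exprn_gt0 // normr_gt0 subr_eq0 eq_sym rs_neq1.
(* tau averages to tau z over the roots, so tau y = tau z for each root y;
   as Re (1 / (1 - y)) = 1/2 on the unit circle, this forces y = z. *)
have sum_tau : \sum_(y <- rs) (tau z - tau y) = 0.
  rewrite sumrB big_const_seq count_predT size_rs iter_addr_0 -raddf_sum.
  by rewrite (sum_inv_1B_roots n z rs z1 Drs) mulr_natl raddfMn subrr.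
have rs_eqz y : y \in rs -> y = z.
  move=> yrs; have : tau y = tau z.
    apply/eqP; rewrite eq_sym -subr_eq0; move/eqP: sum_tau.
    rewrite big_seq psumr_eq0 => [/allP/(_ y yrs)|u urs]; last first.
      by rewrite subr_ge0 tau_le.
    by rewrite yrs.
  move=> tau_yz; apply/oppr_inj/(addrI 1)/invr_inj.
  rewrite [LHS]Crect [RHS]Crect (Re_inv_1B y (norm_rs y yrs) (rs_neq1 y yrs)).
  by rewrite (Re_inv_1B z nz z1); congr (_ + 'i * _).
have := sum_roots_XnsubC n z rs n_gt1 Drs; rewrite (eq_big_seq (fun=> z)) //.
rewrite big_const_seq count_predT size_rs iter_addr_0 => /eqP.
by rewrite mulrn_eq0 -normr_eq0 nz oner_eq0 orbF gtn_eqF.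
Qed.

Lemma omega_prim_root N : (1 < N)%N -> N.-primitive_root (omega C N).
Proof.
move=> N_gt1; have N_gt0 := ltnW N_gt1.
set r := N.-root (-1 : C).
have rN : r ^+ N = -1 by rewrite /r rootCK.
have N1_neq1 : (-1 : C) != 1 by rewrite lt_eqF // (lt_trans (ltrN10 C) ltr01).
have omegaN : omega C N ^+ N = 1 by rewrite /omega -/r exprAC rN sqrrN expr1n.
case: (prim_order_exists N_gt0 omegaN) => d prim_d /dvdnP[q Nqd].
suff q1 : q = 1%N by rewrite {1}Nqd q1 mul1n.
have rd : r ^+ d = -1.
  have : (r ^+ d) ^+ 2 == 1 by rewrite exprAC (prim_expr_order prim_d).
  rewrite sqrf_eq1 => /orP[/eqP rd1 | /eqP //].
  by move: rN; rewrite Nqd mulnC exprM rd1 expr1n => /esym/eqP; rewrite (negbTE N1_neq1).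
have [q_le1|q_gt1] := leqP q 1.
  by apply/eqP; rewrite eqn_leq q_le1 lt0n; apply: contraTneq N_gt0 => q0; rewrite Nqd q0.
have Re_lt := rootC_Re_gt q r q_gt1.
have nr : `|r| = 1.
  by apply/eqP; rewrite -(pexpr_eq1 N_gt0) // -normrX rN normrN normr1.
have r1 : r != 1 by apply: contra_neq N1_neq1 => r1; rewrite -rN r1 expr1n.
(* q.-root r is an N-th root of -1 in the upper half plane with larger real
   part than r, against the extremal choice of r = N.-root (-1). *)
have yN : (q.-root r) ^+ N = -1 by rewrite Nqd exprM rootCK ?rd // ltnW.
have := rootC_Re_max N_gt0 yN (Im_rootC_ge0 r q_gt1).
by move/(lt_le_trans (Re_lt nr (Im_rootC_ge0 _ N_gt1) r1)); rewrite ltxx.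
Qed.

End UnitCircle.

Section DIHPFourier.
Variables (C : numClosedFieldType) (V E : finType) (k n K N : nat).
Variables (ev : E -> k.-tuple V) (mu : E -> {ffun 'I_k -> 'Z_N} -> C).
Variable z : E -> 'I_K -> {ffun 'I_k -> 'I_n} -> option {ffun 'I_k -> 'Z_N}.
Hypotheses (N_gt1 : (1 < N)%N) (ev_uniq : forall e, uniq (ev e)).
Hypotheses (mu_dist : dist_labeled mu) (z_acyclic : ~~ cyclic ev z).

Local Notation Occ := (Occ E k n K).
Local Notation vertex := (V * 'I_n)%type.
Local Notation assignment := {ffun vertex -> 'Z_N}.
Local Notation label := {ffun 'I_k -> 'Z_N}.
Local Notation hedge o := (hedge ev o.1.1 o.2).
Implicit Types (o : Occ) (b x : assignment) (y : label) (v w : vertex).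

Definition occ_factor (o : Occ) (x : assignment) : C :=
  match z o.1.1 o.1.2 o.2 with
  | Some a => (N ^ k)%:R * mu o.1.1 [ffun i => x (hedge o i) - a i]
  | None => 1
  end.

Definition supp_occ : {set Occ} := [set o | insupp z o].

Lemma gzeta_prod x : gzeta ev z mu x = \prod_(o in supp_occ) occ_factor o x.
Proof.
rewrite big_mkcond; apply: eq_bigr => o _; rewrite inE /insupp /occ_factor.
by case: (z _ _ _).
Qed.

Lemma occ_factor_local o x x' :
  {in overts ev o, x =1 x'} -> occ_factor o x = occ_factor o x'.
Proof.
move=> xx'; rewrite /occ_factor; case: (z _ _ _) => // a.
by congr (_ * mu _ _); apply/ffunP => i; rewrite !ffunE xx' ?imset_f.
Qed.

Lemma hedge_inj o : injective (hedge o).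
Proof. by move=> i j [/(tuple_uniqP _ (ev_uniq o.1.1))]. Qed.

Lemma card_overts o : #|overts ev o| = k.
Proof. by rewrite card_imset ?card_ord //; exact: hedge_inj. Qed.

Lemma exists_leaf_occ (F : {set Occ}) (W : {set vertex}) :
  F \subset supp_occ -> F != set0 -> (#|W| <= 1)%N ->
  exists2 o, o \in F & exists i0 : 'I_k, forall i, i != i0 ->
    hedge o i \notin (\bigcup_(o' in F :\ o) overts ev o') :|: W.
Proof.
move=> F_supp F0 W1.
have U_gt : (#|F| * k.-1 < #|\bigcup_(o in F) overts ev o|)%N.
  move: z_acyclic; rewrite negb_or => /andP[_ /existsPn/(_ F)].
  by rewrite F0 F_supp /= -ltnNge.
have [o oF B1] := @exists_low_degree_edge _ _ _ _ card_overts _ _ F0 W1 U_gt.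
exists o => //.
set B := [set v in overts ev o | _] in B1.
have inB i : hedge o i \in (\bigcup_(o' in F :\ o) overts ev o') :|: W ->
    hedge o i \in B.
  rewrite !inE imset_f //= => /orP[/bigcupP[o' o'F vo'] | ->]; last by rewrite orbT.
  apply/orP; left; rewrite /deg (bigD1 o) //= imset_f // add1n ltnS lt0n.
  move: o'F; rewrite !inE => /andP[o'o o'F].
  by rewrite sum_nat_eq0 negb_forall; apply/existsP; exists o'; rewrite o'o o'F vo'.
case: (pickP (fun i => hedge o i \in B)) => [i0 i0B | noB].
  exists i0 => i; apply: contra_neqN => /inB iB.
  by apply: (hedge_inj o); move/card_le1_eqP: B1; apply.
have k_gt0 : (0 < k)%N.
  have /card_gt0P[v /bigcupP[o' _ /imsetP[i _ _]]] := leq_ltn_trans (leq0n _) U_gt.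
  exact: leq_ltn_trans (leq0n i) (ltn_ord i).
by exists (Ordinal k_gt0) => i _; apply: contraFN (noB i) => /inB.
Qed.

Definition occ_embed o y : assignment :=
  [ffun v => if [pick i | hedge o i == v] is Some i then y i else 0].

Lemma occ_embed_hedge o y i : occ_embed o y (hedge o i) = y i.
Proof.
rewrite ffunE; case: pickP => [j /eqP /hedge_inj -> // | /(_ i)].
by rewrite eqxx.
Qed.

Lemma occ_embed_out o y i0 v : y i0 = 0 ->
  (forall i, i != i0 -> hedge o i != v) -> occ_embed o y v = 0.
Proof.
move=> y0 hv; rewrite ffunE; case: pickP => // j /eqP hj.
by case: (eqVneq j i0) => [-> // | /hv]; rewrite hj eqxx.
Qed.

Lemma card_ZN : #|{: 'Z_N}| = N.
Proof. by rewrite card_ord Zp_cast. Qed.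

Lemma count_label_coord0 (i0 : 'I_k) :
  N%:R * \sum_(y : label) ((y i0 == 0)%:R : C) = (N ^ k)%:R.
Proof.
have shift t :
    \sum_(y : label) ((y i0 == t)%:R : C) = \sum_(y : label) ((y i0 == 0)%:R : C).
  rewrite (reindex_inj (addIr [ffun=> t])) /=; apply: eq_bigr => y _.
  by rewrite !ffunE -{2}(add0r t) (inj_eq (addIr t)).
transitivity (\sum_(t : 'Z_N) \sum_(y : label) ((y i0 == t)%:R : C)).
  by rewrite (eq_bigr _ (fun t _ => shift t)) sumr_const card_ZN mulr_natl.
rewrite exchange_big /= (eq_bigr (fun=> 1)) => [|y _].
  by rewrite sumr_const card_ffun card_ZN card_ord.
by rewrite (bigD1 (y i0)) //= eqxx big1 ?addr0 // => t /negbTE; rewrite eq_sym => ->.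
Qed.

Lemma sum_occ_factor_shift o (i0 : 'I_k) x : o \in supp_occ ->
  \sum_(y : label) (y i0 == 0)%:R * occ_factor o (x + occ_embed o y)
    = (N ^ k)%:R / N%:R.
Proof.
have [_ _ mu_marginal] := mu_dist.
rewrite inE /insupp /occ_factor; case: (z _ _ _) => [a|] // _.
set dx : label := [ffun i => x (hedge o i) - a i].
rewrite -(mu_marginal o.1.1 i0 (dx i0)) mulr_sumr [RHS]big_mkcond /=.
rewrite [RHS](reindex_inj (addrI dx)) /=; apply: eq_bigr => y _.
rewrite ffunE -{2}(addr0 (dx i0)) (inj_eq (addrI _)).
case: (y i0 == 0); rewrite ?mul0r // mul1r; congr (_ * mu _ _).
apply/ffunP => i; rewrite ffunE [_ (hedge o i)]ffunE occ_embed_hedge.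
by rewrite [RHS]ffunE ffunE addrAC.
Qed.

Lemma sum_occ_factor_leaf o (i0 : 'I_k) (A : assignment -> C) : o \in supp_occ ->
  (forall x y, y i0 = 0 -> A (x + occ_embed o y) = A x) ->
  \sum_x occ_factor o x * A x = \sum_x A x.
Proof.
move=> o_supp A_inv; set T := \sum_(y : label) ((y i0 == 0)%:R : C).
have NT : N%:R * T = (N ^ k)%:R := count_label_coord0 i0.
have N_gt0 := ltnW N_gt1.
have N0 : N%:R != 0 :> C by rewrite pnatr_eq0 -lt0n.
have Nk0 : (N ^ k)%:R != 0 :> C by rewrite pnatr_eq0 expn_eq0 negb_and -lt0n N_gt0.
have T0 : T != 0 by apply: contra_neq Nk0 => T0; rewrite -NT T0 mulr0.
(* Average over the shifts y with y i0 = 0: each leaves the sum unchanged, and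
   the leaf factor sums over them to N^k / N by the uniform marginal at i0. *)
apply: (mulfI T0).
transitivity (\sum_(y : label) (y i0 == 0)%:R *
                \sum_(x : assignment) occ_factor o (x + occ_embed o y) * A x).
  rewrite mulr_suml; apply: eq_bigr => y _.
  case: (eqVneq (y i0) 0) => [y0 | _]; last by rewrite !mul0r.
  have shift_inj : injective (fun x => x + occ_embed o y) by exact: addIr.
  congr (_ * _); rewrite (reindex_inj shift_inj) /=.
  by apply: eq_bigr => x _; rewrite A_inv.
under eq_bigr do rewrite mulr_sumr.
rewrite exchange_big mulr_sumr; apply: eq_bigr => x _.
under eq_bigr do rewrite mulrA.
by rewrite -mulr_suml sum_occ_factor_shift // -NT [_ * T / _]mulrAC mulfV ?mul1r.
Qed.

Lemma sum_prod_occ_factor (F : {set Occ}) (W D : {set vertex}) (h : assignment -> C) :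
  F \subset supp_occ -> (#|W| <= 1)%N ->
  (forall o v, o \in F -> v \in overts ev o -> v \in D -> v \in W) ->
  (forall x x', {in D, x =1 x'} -> h x = h x') ->
  \sum_x (\prod_(o in F) occ_factor o x) * h x = \sum_x h x.
Proof.
move=> + W1 + h_loc; have [m] := ubnP #|F|.
elim: m F => // m IH F le_Fm F_supp F_D.
have [-> | F0] := eqVneq F set0.
  by apply: eq_bigr => x _; rewrite big_set0 mul1r.
have [o oF [i0 leaf_o]] := exists_leaf_occ F W F_supp F0 W1.
rewrite -(IH (F :\ o)); first last.
- by move=> o' v /setD1P[_ o'F]; exact: F_D.
- exact: subset_trans (subD1set F o) F_supp.
- by move: le_Fm; rewrite (cardsD1 o F) oF.
under eq_bigr do rewrite (big_setD1 o oF) -mulrA.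
apply: (sum_occ_factor_leaf o i0); first exact: (subsetP F_supp).
move=> x y y0; have shift_out v : (forall i, i != i0 -> hedge o i != v) ->
    (x + occ_embed o y) v = x v.
  by move=> hv; rewrite ffunE (occ_embed_out o y i0 v y0 hv) addr0.
congr (_ * _).
  apply: eq_bigr => o' o'F; apply: occ_factor_local => v vo'.
  apply: shift_out => i /leaf_o; apply: contraNneq => ->.
  by rewrite inE; apply/orP; left; apply/bigcupP; exists o'.
apply: h_loc => v vD; apply: shift_out => i /leaf_o; apply: contraNneq => hv.
by rewrite inE (F_D o (hedge o i)) ?orbT ?imset_f ?hv.
Qed.

Lemma expect_gzeta : expect (gzeta ev z mu) = 1.
Proof.
have := @sum_prod_occ_factor supp_occ set0 set0 (fun=> 1) (subxx _).
rewrite cards0 => /(_ isT (fun _ _ _ _ => id) (fun _ _ _ => erefl)).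
under eq_bigr do rewrite mulr1 -gzeta_prod.
rewrite /expect => ->; rewrite sumr_const mulVf // pnatr_eq0 -lt0n.
by apply/card_gt0P; exists 0.
Qed.

(* 'Z_N is built on 'I_((Zp_trunc N).+2): primitivity at that modulus matches
   the definitional arithmetic of [val] on 'Z_N. *)
Lemma omega_prim_Zp : (Zp_trunc N).+2.-primitive_root (omega C N).
Proof. by rewrite Zp_cast //; exact: omega_prim_root. Qed.

Definition delta (w : vertex) : assignment := [ffun v => if v == w then 1 else 0].

Lemma chi_add_delta b x w :
  chi C b (x + delta w) = chi C b x * omega C N ^+ val (b w).
Proof.
rewrite /chi (bigD1 w) //= [in RHS](bigD1 w) //= -!exprD.
apply/eqP; rewrite (eq_prim_root_expr omega_prim_Zp).
rewrite (eq_bigr (fun v => val (b v) * val (x v))%N) => [|v /negbTE vw]; last first.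
  by rewrite !ffunE vw addr0.
rewrite !ffunE eqxx.
have -> : val (x w + 1) = ((val (x w) + 1) %% (Zp_trunc N).+2)%N.
  by rewrite /= modnDmr.
by rewrite -modnDml modnMmr modnDml mulnDr muln1 addnAC.
Qed.

Lemma sum_conj_chi_shift_eq0 (P : assignment -> C) b w : b w != 0 ->
  (forall x, P (x + delta w) = P x) -> \sum_x P x * (chi C b x)^* = 0.
Proof.
move=> bw0 P_inv; set S := \sum_x _; set zeta := omega C N ^+ val (b w).
have zeta1 : zeta^* != 1.
  rewrite -conjC1 (can_eq conjCK) -(prim_order_dvd omega_prim_Zp) gtnNdvd ?ltn_ord //.
  by rewrite lt0n; apply: contraNneq bw0 => bw; rewrite -val_eqE bw.
have S_eq : S = S * zeta^*.
  have shift_inj : injective (fun x => x + delta w) by exact: addIr.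
  rewrite {1}/S (reindex_inj shift_inj) mulr_suml; apply: eq_bigr => x _.
  by rewrite P_inv chi_add_delta rmorphM mulrA.
apply/eqP; move/eqP: S_eq; rewrite -subr_eq0 -{1}(mulr1 S) -mulrBr mulf_eq0.
by rewrite subr_eq0 [1 == _]eq_sym (negbTE zeta1) orbF.
Qed.

Lemma hcomp_closed w o v : o \in supp_occ -> v \in overts ev o ->
  v \in hcomp ev z w -> overts ev o \subset hcomp ev z w.
Proof.
move=> o_supp vo; rewrite inE => wv; apply/subsetP => u uo; rewrite inE.
apply: connect_trans wv (connect1 _); apply/existsP; exists o.
by move: o_supp; rewrite inE => ->; rewrite vo uo.
Qed.

Lemma fourier_gzeta_eq0 b w : b w != 0 ->
  {in hcomp ev z w, forall v, v != w -> b v = 0} -> fourier (gzeta ev z mu) b = 0.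
Proof.
move=> bw0 b_comp; rewrite /fourier /expect.
suff -> : \sum_x gzeta ev z mu x * (chi C b x)^* = 0 by rewrite mulr0.
set Hc := hcomp ev z w; have wHc : w \in Hc by rewrite inE connect0.
pose B := [set o : Occ | overts ev o \subset Hc].
pose D := [set v | (v \notin Hc) || (v == w)].
have out_Hc o v : o \in supp_occ :\: B -> v \in overts ev o -> v \notin Hc.
  case/setDP=> o_supp oB vo; apply: contra oB => vHc.
  by rewrite inE (hcomp_closed w o v o_supp vo vHc).
pose P x := \prod_(o in supp_occ :\: B) occ_factor o x.
have P_loc x x' : {in ~: Hc, x =1 x'} -> P x = P x'.
  move=> xx'; apply: eq_bigr => o oB; apply: occ_factor_local => v vo.
  by apply: xx'; rewrite inE (out_Hc o).
under eq_bigr do rewrite gzeta_prod (big_setID B) /= -mulrA -/(P _).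
rewrite (sum_prod_occ_factor (supp_occ :&: B) [set w] D
  (fun x => P x * (chi C b x)^*) (subsetIl _ _) (eq_leq (cards1 w))).
- apply: sum_conj_chi_shift_eq0 bw0 _ => x; apply: P_loc => v; rewrite inE => vHc.
  have /negbTE vw : v != w by apply: contraNneq vHc => ->.
  by rewrite !ffunE vw addr0.
- move=> o v /setIP[_]; rewrite inE => /subsetP oHc vo.
  by rewrite [v \in D]inE (oHc v vo) /= inE.
move=> x x' xx'; congr (_ * _^*).
  by apply: P_loc => v; rewrite inE => vHc; apply: xx'; rewrite inE vHc.
rewrite /chi; congr (_ ^+ _); apply: eq_bigr => v _.
case: (boolP (v \in D)) => [/xx' -> // |]; rewrite inE negb_or negbK.
by case/andP=> vHc vw; rewrite b_comp.
Qed.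

Lemma fourier_gzeta_support b : fourier (gzeta ev z mu) b != 0 ->
  (forall u, b u != 0 -> (2 <= #|hcomp ev z u|)%N) /\
  (forall u, (2 <= #|hcomp ev z u|)%N ->
     #|[set w in hcomp ev z u | b w != 0]| != 1%N).
Proof.
move=> /eqP fb_neq0; have hcomp_refl u : u \in hcomp ev z u by rewrite inE connect0.
split=> [u bu | u _].
  rewrite leqNgt ltnS; apply/negP => /card_le1_eqP hcomp1.
  apply/fb_neq0/(fourier_gzeta_eq0 b u bu) => v vu.
  by rewrite (hcomp1 v u vu (hcomp_refl u)) eqxx.
apply/negP => /cards1P[w supp_b].
have /setIdP[uw bw] : w \in [set w in hcomp ev z u | b w != 0] by rewrite supp_b set11.
apply/fb_neq0/(fourier_gzeta_eq0 b w bw) => v wv vw; apply/eqP; apply: contraNT vw => bv.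
have : v \in [set w in hcomp ev z u | b w != 0].
  by rewrite !inE bv andbT; rewrite !inE in uw wv; exact: connect_trans uw wv.
by rewrite supp_b inE.
Qed.

End DIHPFourier.

Theorem lemma6p3 (C : numClosedFieldType) (V E : finType) (k n K N : nat)
  (alpha : C) (ev : E -> k.-tuple V) (mu : E -> {ffun 'I_k -> 'Z_N} -> C)
  (z : E -> 'I_K -> {ffun 'I_k -> 'I_n} -> option {ffun 'I_k -> 'Z_N}) :
  (1 < N)%N ->
  (forall e, uniq (ev e)) ->
  dist_labeled mu ->
  alpha \is Num.real ->
  is_restriction_seq ev z alpha ->
  ~~ cyclic ev z ->
  expect (gzeta ev z mu) = 1 /\
  (forall b : {ffun V * 'I_n -> 'Z_N}, fourier (gzeta ev z mu) b != 0 ->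
     (forall u, b u != 0 -> (2 <= #|hcomp ev z u|)%N) /\
     (forall u, (2 <= #|hcomp ev z u|)%N ->
        #|[set w in hcomp ev z u | b w != 0]| != 1%N)).
Proof.
move=> N_gt1 ev_uniq mu_dist _ _ z_acyclic.
by split; [exact: expect_gzeta | exact: fourier_gzeta_support].
Qed.
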